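(* Let $\varphi$ be a finite conjunction of literals of the two forms $x\in y$ and $x = y\setminus z$ (with $x,y,z$ set variables), with finite set of variables $\mathrm{Vars}(\varphi)$. Let $M$ be a set assignment over $\mathrm{Vars}(\varphi)$ satisfying $\varphi$; let $\bar x,\bar y\in\mathrm{Vars}(\varphi)$, let $\overline{M}$ be a set assignment over $\mathrm{Vars}(\varphi)$ satisfying $\varphi$ with $\overline{M}\bar x\neq \overline{M}\bar y$, and let $\mathfrak{t}$ be a set belonging to exactly one of $\overline{M}\bar x$, $\overline{M}\bar y$. Fix a set $\mathfrak{s}$ with $\mathrm{rk}(\mathfrak{s})>\mathrm{rk}(M)$. Define $\mathsf{V}_0=\{u\in\mathrm{Vars}(\varphi)\mid \mathfrak{t}\in\overline{M}u\}$; $\mathsf{V}_n=\{u\in\mathrm{Vars}(\varphi)\mid Mu\cap\{Mw\mid w\in\mathsf{V}_{n-1}\}\neq\emptyset\}$ for $n\ge1$; $M_0v=Mv\cup\{\mathfrak{s}\}$ if $v\in\mathsf{V}_0$ and $M_0v=Mv$ otherwise; for $n\ge1$, $M_nv=M_{n-1}v\cup\{M_{n-1}u\mid u\in\mathsf{V}_{n-1},\ Mu\in Mv\}$ if $v\in\mathsf{V}_n$ and $M_nv=M_{n-1}v$ otherwise. Then for all $n\in\mathbb{N}$ and $v\in\mathrm{Vars}(\varphi)$: if $v\in\mathsf{V}_n$ then $\mathrm{rk}(M_nv)=\mathrm{rk}(\mathfrak{s})+n+1$, and if $v\notin\mathsf{V}_n$ then $\mathrm{rk}(M_nv)\le\m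athrm{rk}(\mathfrak{s})+n$.
   Context: A set assignment is a map from a finite set of set variables into the von Neumann universe $\mathcal{V}=\bigcup_\alpha\mathcal{V}_\alpha$, $\mathcal{V}_\alpha=\bigcup_{\beta<\alpha}\mathcal{P}(\mathcal{V}_\beta)$; it satisfies $x\in y$ iff $Mx\in My$ and $x=y\setminus z$ iff $Mx=My\setminus Mz$. The rank $\mathrm{rk}(s)$ of a set $s$ is the least ordinal $\alpha$ with $s\subseteq\mathcal{V}_\alpha$, and $\mathrm{rk}(M)=\max\{\mathrm{rk}(Mx)\mid x\in\mathrm{dom}(M)\}$. Addition of ranks and natural numbers is ordinal addition. *)

(* The von Neumann universe is modelled by Aczel's
   well-founded sets (W-type of sets indexed by types), with extensional
   equality [eqV] and membership [mem]. *)
From Stdlib Require Import List ClassicalEpsilon ClassicalDescription.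
Import ListNotations.

Inductive V : Type := sup : forall A : Type, (A -> V) -> V.

Definition idx (x : V) : Type := match x with sup A _ => A end.
Definition el (x : V) : idx x -> V := match x with sup _ f => f end.

Fixpoint eqV (x y : V) : Prop :=
  match x with
  | sup A f => match y with
    | sup B g => (forall a, exists b, eqV (f a) (g b)) /\
                 (forall b, exists a, eqV (f a) (g b))
    end
  end.

Definition mem (x y : V) : Prop := exists b : idx y, eqV x (el y b).

Definition subset (x y : V) : Prop := forall t, mem t x -> mem t y.

Definition emptyset : V := sup False (fun e => match e with end).
Definition single (x : V) : V := sup unit (fun _ => x).
Definition union (x y : V) : V :=
  sup (idx x + idx y) (fun p => match p with inl a => el x a | inr b => el y b end).
Definition setdiff (y z : V) : V :=
  sup {b : idx y | ~ mem (el y b) z} (fun b => el y (proj1_sig b)).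
Definition powerset (x : V) : V :=
  sup (idx x -> Prop) (fun P => sup {a : idx x | P a} (fun a => el x (proj1_sig a))).
Definition bigunion (x : V) : V :=
  sup {a : idx x & idx (el x a)} (fun p => el (el x (projT1 p)) (projT2 p)).

Fixpoint Vstage (a : V) : V :=
  match a with
  | sup A f => bigunion (sup A (fun i => powerset (Vstage (f i))))
  end.

(* von Neumann ordinals: transitive sets (strictly) well-ordered by ∈
   (well-foundedness is automatic for these sets) *)
Definition transitive (x : V) : Prop := forall y, mem y x -> subset y x.
Definition Ordinal (a : V) : Prop :=
  transitive a /\
  (forall x, mem x a -> ~ mem x x) /\
  (forall x y z, mem x a -> mem y a -> mem z a -> mem x y -> mem y z -> mem x z) /\
  (forall x y, mem x a -> mem y a -> mem x y \/ eqV x y \/ mem y x).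

Definition olt (a b : V) : Prop := mem a b.
Definition ole (a b : V) : Prop := mem a b \/ eqV a b.

Definition IsRank (s a : V) : Prop :=
  Ordinal a /\ subset s (Vstage a) /\
  (forall b, Ordinal b -> subset s (Vstage b) -> ole a b).
Definition rk (s : V) : V := epsilon (inhabits emptyset) (IsRank s).

Definition osucc (a : V) : V := union a (single a).
Fixpoint oadd (a : V) (n : nat) : V :=
  match n with 0 => a | S m => osucc (oadd a m) end.

Inductive lit : Type :=
| LIn : nat -> nat -> lit
| LDiff : nat -> nat -> nat -> lit.

Definition lit_vars (l : lit) : list nat :=
  match l with LIn x y => [x; y] | LDiff x y z => [x; y; z] end.

Definition Vars (phi : list lit) (u : nat) : Prop :=
  exists l, In l phi /\ In u (lit_vars l).

Definition sat_lit (M : nat -> V) (l : lit) : Prop :=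
  match l with
  | LIn x y => mem (M x) (M y)
  | LDiff x y z => eqV (M x) (setdiff (M y) (M z))
  end.

Definition satisfies (M : nat -> V) (phi : list lit) : Prop :=
  forall l, In l phi -> sat_lit M l.

Fixpoint Vn (phi : list lit) (M Mbar : nat -> V) (t : V) (n : nat) : nat -> Prop :=
  match n with
  | 0 => fun u => Vars phi u /\ mem t (Mbar u)
  | S m => fun u => Vars phi u /\
      exists e, mem e (M u) /\ exists w, Vn phi M Mbar t m w /\ eqV e (M w)
  end.

Fixpoint Mn (phi : list lit) (M Mbar : nat -> V) (t s : V) (n : nat) : nat -> V :=
  match n with
  | 0 => fun v =>
      if excluded_middle_informative (Vn phi M Mbar t 0 v)
      then union (M v) (single s) else M v
  | S m => fun v =>
      if excluded_middle_informative (Vn phi M Mbar t (S m) v)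
      then union (Mn phi M Mbar t s m v)
             (sup {u : nat | Vn phi M Mbar t m u /\ mem (M u) (M v)}
                  (fun u => Mn phi M Mbar t s m (proj1_sig u)))
      else Mn phi M Mbar t s m v
  end.

(* Ranks are computed by ∈-induction: rk x is the least ordinal strictly above
   the ranks of the elements of x, so a set all of whose elements have rank at
   most α, with α attained, has rank α + 1.  At stage 0 the new element s has
   rank rk s and dominates every element of M v, since rk (M v) < rk s.  At
   stage n + 1 the new elements M_n u (u ∈ V_n) have rank rk s + n + 1 by
   induction and dominate everything already in M_n v, whose rank is at most
   rk s + n + 1.  Only the hypothesis rk (M v) < rk s is used. *)

From Pilot Require Import Defs.
From Stdlib Require Import List ClassicalEpsilon ClassicalDescription.
From Stdlib Require Import Classical Setoid Morphisms.

Lemma eqV_refl x : eqV x x.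
Proof. induction x as [A f IH]; split; intro a; exists a; apply IH. Qed.

Lemma eqV_sym x y : eqV x y -> eqV y x.
Proof.
  revert y; induction x as [A f IH]; intros [B g] [H1 H2]; split.
  - intro b; destruct (H2 b) as [a Ha]; exists a; apply IH, Ha.
  - intro a; destruct (H1 a) as [b Hb]; exists b; apply IH, Hb.
Qed.

Lemma eqV_trans x y z : eqV x y -> eqV y z -> eqV x z.
Proof.
  revert y z; induction x as [A f IH]; intros [B g] [C h] [H1 H2] [H3 H4]; split.
  - intro a; destruct (H1 a) as [b Hb]; destruct (H3 b) as [c Hc].
    exists c; eapply IH; eauto.
  - intro c; destruct (H4 c) as [b Hb]; destruct (H2 b) as [a Ha].
    exists a; eapply IH; eauto.
Qed.

#[export] Instance eqV_Equivalence : Equivalence eqV.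
Proof. split; [exact eqV_refl | exact eqV_sym | exact eqV_trans]. Qed.

Lemma mem_eqV_r x y y' : eqV y y' -> mem x y -> mem x y'.
Proof.
  destruct y as [B g], y' as [C h]; intros [H _] [b Hb].
  destruct (H b) as [c Hc]; exists c; simpl in *; now rewrite Hb.
Qed.

#[export] Instance mem_Proper : Proper (eqV ==> eqV ==> iff) mem.
Proof.
  intros x x' Ex y y' Ey; unfold mem; split; intro H.
  - apply (mem_eqV_r _ y); [exact Ey|].
    destruct H as [b Hb]; exists b; now rewrite <- Ex.
  - apply (mem_eqV_r _ y'); [now symmetry|].
    destruct H as [b Hb]; exists b; now rewrite Ex.
Qed.

#[export] Instance subset_Proper : Proper (eqV ==> eqV ==> iff) subset.
Proof.
  intros x x' Ex y y' Ey; unfold subset; now setoid_rewrite Ex; setoid_rewrite Ey.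
Qed.

Lemma el_mem x i : mem (el x i) x.
Proof. exists i; reflexivity. Qed.

Lemma eqV_ext x y : eqV x y <-> (forall t, mem t x <-> mem t y).
Proof.
  split; [intros E t; now rewrite E|].
  destruct x as [A f], y as [B g]; intro H; split.
  - intro a; apply (H (f a)), (el_mem (sup A f)).
  - intro b; destruct (proj2 (H (g b)) (el_mem (sup B g) b)) as [a Ha].
    exists a; now symmetry.
Qed.

Lemma mem_ind (P : V -> Prop) :
  (forall y, (forall x, mem x y -> P x) -> P y) -> forall y, P y.
Proof.
  intros H y; enough (Hy : forall z, eqV z y -> P z) by (apply Hy; reflexivity).
  induction y as [A f IH]; intros z Hz; apply H; intros x Hx.
  rewrite Hz in Hx; destruct Hx as [a Ha]; exact (IH a x Ha).
Qed.

Lemma mem_union t x y : mem t (union x y) <-> mem t x \/ mem t y.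
Proof.
  split.
  - intros [[a|b] H]; [left|right]; eexists; exact H.
  - intros [[a H]|[b H]]; [exists (inl a)|exists (inr b)]; exact H.
Qed.

Lemma mem_single t x : mem t (single x) <-> eqV t x.
Proof. split; [intros [u H]; exact H | intro H; exists tt; exact H]. Qed.

Lemma mem_bigunion t X : mem t (bigunion X) <-> exists c, mem c X /\ mem t c.
Proof.
  split.
  - intros [[a b] H]; exists (el X a); split; [apply el_mem | exists b; exact H].
  - intros [c [Hc Htc]]; destruct Hc as [a Ha]; rewrite Ha in Htc.
    destruct Htc as [b Hb]; exists (existT _ a b); exact Hb.
Qed.

Lemma mem_powerset t x : mem t (powerset x) <-> subset t x.
Proof.
  split.
  - intros [P HP] u Hu; rewrite HP in Hu.
    destruct Hu as [[a Ha] Hua]; exists a; exact Hua.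
  - intros Hsub; exists (fun a => mem (el x a) t); apply eqV_ext; intro u; split.
    + intros Hu; destruct (Hsub u Hu) as [a Ha].
      assert (Hat : mem (el x a) t) by now rewrite <- Ha.
      exists (exist _ a Hat); exact Ha.
    + intros [[a Ha] Hua]; simpl in Hua; now rewrite Hua.
Qed.

Lemma mem_Vstage_sup t A (f : A -> V) :
  mem t (Vstage (sup A f)) <-> exists i, subset t (Vstage (f i)).
Proof.
  simpl; rewrite mem_bigunion; split.
  - intros [c [[i Hi] Htc]]; exists i; apply mem_powerset; now rewrite <- Hi.
  - intros [i Hi]; exists (powerset (Vstage (f i))); split.
    + exact (el_mem (sup A (fun i => powerset (Vstage (f i)))) i).
    + now apply mem_powerset.
Qed.

#[export] Instance Vstage_Proper : Proper (eqV ==> eqV) Vstage.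
Proof.
  intro a; induction a as [A f IH]; intros [B g] [H1 H2]; apply eqV_ext; intro t.
  rewrite !mem_Vstage_sup; split.
  - intros [i Hi]; destruct (H1 i) as [j Hj]; exists j; now rewrite <- (IH i _ Hj).
  - intros [j Hj]; destruct (H2 j) as [i Hi]; exists i; now rewrite (IH i _ Hi).
Qed.

Lemma mem_Vstage t a : mem t (Vstage a) <-> exists c, mem c a /\ subset t (Vstage c).
Proof.
  destruct a as [A f]; rewrite mem_Vstage_sup; split.
  - intros [i Hi]; exists (f i); split; [apply (el_mem (sup A f)) | exact Hi].
  - intros [c [[i Hi] Hs]]; exists i; now rewrite <- Hi.
Qed.

#[export] Instance Ordinal_Proper : Proper (eqV ==> iff) Ordinal.
Proof.
  intros a a' E; unfold Ordinal, Defs.transitive, subset; now setoid_rewrite E.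
Qed.

Lemma Ordinal_trans a x y : Ordinal a -> mem x y -> mem y a -> mem x a.
Proof. intros [Ht _] Hxy Hya; exact (Ht y Hya x Hxy). Qed.

Lemma Ordinal_mem a x : Ordinal a -> mem x a -> Ordinal x.
Proof.
  intros Ha Hx; pose proof Ha as (_ & Hirr & Htr & Htri).
  assert (Hsub : forall y, mem y x -> mem y a) by (intros; eapply Ordinal_trans; eauto).
  split; [|split; [|split]].
  - intros y Hy z Hz; apply (Htr z y x); auto; eapply Ordinal_trans; eauto.
  - intros y Hy; apply Hirr; auto.
  - intros y z w Hy Hz Hw; apply Htr; auto.
  - intros y z Hy Hz; apply Htri; auto.
Qed.

Lemma Ordinal_irrefl a : Ordinal a -> ~ mem a a.
Proof. intros (_ & Hirr & _) H; exact (Hirr a H H). Qed.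

Lemma Ordinal_trichotomy a b :
  Ordinal a -> Ordinal b -> mem a b \/ eqV a b \/ mem b a.
Proof.
  revert b; induction a as [a IHa] using mem_ind; intro b.
  induction b as [b IHb] using mem_ind; intros Ha Hb.
  destruct (classic (mem a b)) as [Hab|Hab]; [now left|].
  destruct (classic (mem b a)) as [Hba|Hba]; [now right; right|].
  right; left; apply eqV_ext; intro x; split; intro Hx.
  - destruct (IHa x Hx b (Ordinal_mem a x Ha Hx) Hb) as [H|[H|H]]; [exact H|..];
      exfalso; apply Hba; [now rewrite <- H | eapply Ordinal_trans; eauto].
  - destruct (IHb x Hx Ha (Ordinal_mem b x Hb Hx)) as [H|[H|H]]; [..|exact H];
      exfalso; apply Hab; [eapply Ordinal_trans; eauto | now rewrite H].
Qed.

Lemma ole_of_subset a b : Ordinal a -> Ordinal b -> subset a b -> ole a b.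
Proof.
  intros Ha Hb Hs; destruct (Ordinal_trichotomy a b Ha Hb) as [H|[H|H]];
    [now left | now right |].
  exfalso; exact (Ordinal_irrefl b Hb (Hs b H)).
Qed.

Lemma ole_antisym a b : Ordinal a -> ole a b -> ole b a -> eqV a b.
Proof.
  intros Ha [H|H] [H'|H']; try assumption; exfalso; apply (Ordinal_irrefl a Ha).
  - exact (Ordinal_trans a a b Ha H H').
  - now rewrite H' in H at 1.
Qed.

Lemma mem_ole_trans c x y : Ordinal c -> mem x y -> ole y c -> mem x c.
Proof. intros Hc Hxy [H|H]; [eapply Ordinal_trans; eauto | now rewrite <- H]. Qed.

Lemma ole_mem_trans c x y : Ordinal c -> ole x y -> mem y c -> mem x c.
Proof. intros Hc [H|H] Hyc; [eapply Ordinal_trans; eauto | now rewrite H]. Qed.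

Lemma Ordinal_of_transitive a :
  Defs.transitive a -> (forall x, mem x a -> Ordinal x) -> Ordinal a.
Proof.
  intros Ht H; split; [exact Ht | split; [|split]].
  - intros x Hx; exact (Ordinal_irrefl x (H x Hx)).
  - intros x y z _ _ Hz Hxy Hyz; exact (Ordinal_trans z x y (H z Hz) Hxy Hyz).
  - intros x y Hx Hy; exact (Ordinal_trichotomy x y (H x Hx) (H y Hy)).
Qed.

Lemma mem_osucc x a : mem x (osucc a) <-> ole x a.
Proof. unfold osucc, ole; now rewrite mem_union, mem_single. Qed.

Lemma osucc_subset a b : Ordinal b -> mem a b -> subset (osucc a) b.
Proof. intros Hb Ha x Hx; apply mem_osucc in Hx; now apply (ole_mem_trans b x a). Qed.

Lemma Ordinal_osucc a : Ordinal a -> Ordinal (osucc a).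
Proof.
  intro Ha; apply Ordinal_of_transitive.
  - intros y Hy z Hz; apply mem_osucc in Hy; apply mem_osucc; left.
    exact (mem_ole_trans a z y Ha Hz Hy).
  - intros x Hx; apply mem_osucc in Hx as [Hx|Hx].
    + exact (Ordinal_mem a x Ha Hx).
    + now rewrite Hx.
Qed.

Lemma Ordinal_bigunion X : (forall c, mem c X -> Ordinal c) -> Ordinal (bigunion X).
Proof.
  intro H; apply Ordinal_of_transitive.
  - intros y Hy z Hz; apply mem_bigunion in Hy as [c [Hc Hyc]]; apply mem_bigunion.
    exists c; split; [exact Hc | exact (Ordinal_trans c z y (H c Hc) Hz Hyc)].
  - intros x Hx; apply mem_bigunion in Hx as [c [Hc Hxc]].
    exact (Ordinal_mem c x (H c Hc) Hxc).
Qed.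

Lemma Ordinal_oadd a n : Ordinal a -> Ordinal (oadd a n).
Proof. intro Ha; induction n; simpl; auto using Ordinal_osucc. Qed.

#[export] Instance IsRank_Proper : Proper (eqV ==> eq ==> iff) IsRank.
Proof. intros x x' E a a' <-; unfold IsRank; now setoid_rewrite E. Qed.

Lemma IsRank_unique x a a' : IsRank x a -> IsRank x a' -> eqV a a'.
Proof. intros (Ha & Hs & Hm) (Ha' & Hs' & Hm'); apply ole_antisym; auto. Qed.

Lemma Vstage_mono c d : Defs.transitive d -> mem c d -> subset (Vstage c) (Vstage d).
Proof.
  intros Hd Hc t Ht; apply mem_Vstage in Ht as [e [He Hs]]; apply mem_Vstage.
  exists e; split; [exact (Hd c Hc e He) | exact Hs].
Qed.

Lemma IsRank_subset_Vstage y a c :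
  IsRank y a -> Ordinal c -> subset y (Vstage c) <-> ole a c.
Proof.
  intros (Ha & Hs & Hm) Hc; split; [now apply Hm|].
  intros [H|H] t Ht.
  - exact (Vstage_mono a c (proj1 Hc) H t (Hs t Ht)).
  - rewrite <- H; exact (Hs t Ht).
Qed.

Lemma IsRank_mem_Vstage y a b : IsRank y a -> Ordinal b -> mem y (Vstage b) <-> mem a b.
Proof.
  intros HR Hb; split.
  - intro H; apply mem_Vstage in H as [c [Hc Hyc]].
    apply (IsRank_subset_Vstage y a c HR (Ordinal_mem b c Hb Hc)) in Hyc.
    exact (ole_mem_trans b a c Hb Hyc Hc).
  - intro H; apply mem_Vstage; exists a; split; [exact H | apply HR].
Qed.

Lemma subset_Vstage_ranks x b :
  (forall y, mem y x -> IsRank y (rk y)) -> Ordinal b ->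
  subset x (Vstage b) <-> forall y, mem y x -> mem (rk y) b.
Proof.
  intros H Hb; split; intros Hx y Hy;
    apply (IsRank_mem_Vstage y (rk y) b (H y Hy) Hb); auto.
Qed.

(* [rk x] is the union of the successors of the ranks of the elements of [x]. *)
Lemma rk_exists x : exists a, IsRank x a.
Proof.
  induction x as [x IH] using mem_ind.
  assert (HR : forall y, mem y x -> IsRank y (rk y))
    by (intros y Hy; unfold rk; apply epsilon_spec, IH, Hy).
  set (a := bigunion (sup (idx x) (fun i => osucc (rk (el x i))))).
  assert (Hranks : forall b, Ordinal b ->
            (forall y, mem y x -> mem (rk y) b) <-> subset a b).
  { intros b Hb; split.
    - intros H z Hz; apply mem_bigunion in Hz as [c [[i Hi] Hzc]]; rewrite Hi in Hzc.
      exact (osucc_subset _ b Hb (H _ (el_mem x i)) z Hzc).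
    - intros H y [i Hi]. apply H, mem_bigunion; exists (osucc (rk (el x i))); split.
      + exact (el_mem (sup (idx x) (fun i => osucc (rk (el x i)))) i).
      + apply mem_osucc; right; apply IsRank_unique with y; [apply HR; now exists i|].
        rewrite Hi; apply HR, el_mem. }
  assert (Ha : Ordinal a).
  { apply Ordinal_bigunion; intros c [i Hi]; rewrite Hi.
    apply Ordinal_osucc, (HR _ (el_mem x i)). }
  exists a; split; [exact Ha | split].
  - apply subset_Vstage_ranks; [exact HR | exact Ha |]; apply Hranks; [exact Ha|].
    intros z Hz; exact Hz.
  - intros b Hb Hxb; apply ole_of_subset; [exact Ha | exact Hb |].
    apply Hranks; [exact Hb|]; now apply subset_Vstage_ranks.
Qed.

Lemma rk_spec x : IsRank x (rk x).
Proof. unfold rk; apply epsilon_spec, rk_exists. Qed.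

Lemma Ordinal_rk x : Ordinal (rk x).
Proof. apply rk_spec. Qed.

#[export] Instance rk_Proper : Proper (eqV ==> eqV) rk.
Proof.
  intros x x' E; apply IsRank_unique with x; [apply rk_spec | rewrite E; apply rk_spec].
Qed.

Lemma rk_mem x y : mem y x -> mem (rk y) (rk x).
Proof.
  destruct (rk_spec x) as (Ho & Hs & _).
  apply (subset_Vstage_ranks x (rk x) (fun y _ => rk_spec y) Ho), Hs.
Qed.

Lemma rk_least x b : Ordinal b -> (forall y, mem y x -> mem (rk y) b) -> ole (rk x) b.
Proof.
  intros Hb H; apply rk_spec; [exact Hb|].
  now apply (subset_Vstage_ranks x b (fun y _ => rk_spec y) Hb).
Qed.

Lemma rk_lt_of_ole x y a : Ordinal a -> ole (rk x) a -> mem y x -> olt (rk y) a.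
Proof. intros Ha Hx Hy; exact (mem_ole_trans a _ _ Ha (rk_mem x y Hy) Hx). Qed.

Lemma rk_eq_osucc x a : Ordinal a ->
  (forall y, mem y x -> ole (rk y) a) -> (exists y, mem y x /\ eqV (rk y) a) ->
  eqV (rk x) (osucc a).
Proof.
  intros Ha Hle [y [Hy Hya]]; apply ole_antisym; [apply Ordinal_rk | |].
  - apply rk_least; [now apply Ordinal_osucc|]; intros z Hz; now apply mem_osucc, Hle.
  - apply ole_of_subset; [now apply Ordinal_osucc | apply Ordinal_rk |].
    apply osucc_subset; [apply Ordinal_rk|]; rewrite <- Hya; now apply rk_mem.
Qed.

Section Stages.

Variables (phi : list lit) (M Mbar : nat -> V) (t s : V).
Hypothesis rk_M_lt : forall x, Vars phi x -> olt (rk (M x)) (rk s).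

Lemma Vn_Vars n u : Vn phi M Mbar t n u -> Vars phi u.
Proof. destruct n; simpl; tauto. Qed.

Lemma Mn_0_in v : Vn phi M Mbar t 0 v -> Mn phi M Mbar t s 0 v = union (M v) (single s).
Proof. intro H; simpl; now destruct excluded_middle_informative. Qed.

Lemma Mn_0_out v : ~ Vn phi M Mbar t 0 v -> Mn phi M Mbar t s 0 v = M v.
Proof. intro H; simpl; now destruct excluded_middle_informative. Qed.

Lemma Mn_S_in m v : Vn phi M Mbar t (S m) v ->
  Mn phi M Mbar t s (S m) v =
  union (Mn phi M Mbar t s m v)
        (sup {u : nat | Vn phi M Mbar t m u /\ mem (M u) (M v)}
             (fun u => Mn phi M Mbar t s m (proj1_sig u))).
Proof. intro H; simpl; now destruct excluded_middle_informative. Qed.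

Lemma Mn_S_out m v : ~ Vn phi M Mbar t (S m) v ->
  Mn phi M Mbar t s (S m) v = Mn phi M Mbar t s m v.
Proof. intro H; simpl; now destruct excluded_middle_informative. Qed.

Definition rk_Mn_spec (n : nat) : Prop :=
  forall v, Vars phi v ->
    (Vn phi M Mbar t n v -> eqV (rk (Mn phi M Mbar t s n v)) (oadd (rk s) (S n))) /\
    (~ Vn phi M Mbar t n v -> ole (rk (Mn phi M Mbar t s n v)) (oadd (rk s) n)).

Lemma rk_Mn_spec_le n : rk_Mn_spec n ->
  forall v, Vars phi v -> ole (rk (Mn phi M Mbar t s n v)) (oadd (rk s) (S n)).
Proof.
  intros Hn v Hv; destruct (classic (Vn phi M Mbar t n v)) as [H|H].
  - right; now apply Hn.
  - left; apply mem_osucc; now apply Hn.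
Qed.

Lemma rk_Mn_spec_0 : rk_Mn_spec 0.
Proof.
  intros v Hv; split; intro HV.
  - rewrite Mn_0_in by exact HV; apply rk_eq_osucc; [apply Ordinal_rk | |].
    + intros y Hy; apply mem_union in Hy as [Hy|Hy].
      * left; exact (Ordinal_trans _ _ _ (Ordinal_rk s) (rk_mem _ _ Hy) (rk_M_lt v Hv)).
      * right; apply mem_single in Hy; now rewrite Hy.
    + exists s; split; [apply mem_union; right; now apply mem_single | reflexivity].
  - rewrite Mn_0_out by exact HV; left; exact (rk_M_lt v Hv).
Qed.

Lemma rk_Mn_spec_S m : rk_Mn_spec m -> rk_Mn_spec (S m).
Proof.
  intros IH v Hv; split; intro HV.
  - rewrite Mn_S_in by exact HV.
    apply (rk_eq_osucc _ (oadd (rk s) (S m))); [apply Ordinal_oadd, Ordinal_rk | |].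
    + intros y Hy; apply mem_union in Hy as [Hy|[[u [Hu Huv]] Hyu]].
      * left; refine (rk_lt_of_ole _ _ _ _ (rk_Mn_spec_le m IH v Hv) Hy).
        apply Ordinal_oadd, Ordinal_rk.
      * right; simpl in Hyu; rewrite Hyu; exact (proj1 (IH u (Vn_Vars m u Hu)) Hu).
    + destruct HV as [_ [e [He [w [Hw Hew]]]]]; rewrite Hew in He.
      exists (Mn phi M Mbar t s m w); split.
      * apply mem_union; right; exists (exist _ w (conj Hw He)); reflexivity.
      * exact (proj1 (IH w (Vn_Vars m w Hw)) Hw).
  - rewrite Mn_S_out by exact HV; exact (rk_Mn_spec_le m IH v Hv).
Qed.

Lemma rk_Mn n : rk_Mn_spec n.
Proof. induction n; [exact rk_Mn_spec_0 | exact (rk_Mn_spec_S n IHn)]. Qed.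

End Stages.

Theorem lemma5 (phi : list lit) (M Mbar : nat -> V) (xb yb : nat) (t s : V) :
  satisfies M phi ->
  satisfies Mbar phi ->
  Vars phi xb -> Vars phi yb ->
  ~ eqV (Mbar xb) (Mbar yb) ->
  ((mem t (Mbar xb) /\ ~ mem t (Mbar yb)) \/ (mem t (Mbar yb) /\ ~ mem t (Mbar xb))) ->
  (forall x, Vars phi x -> olt (rk (M x)) (rk s)) ->
  forall (n : nat) (v : nat), Vars phi v ->
    (Vn phi M Mbar t n v -> eqV (rk (Mn phi M Mbar t s n v)) (oadd (rk s) (S n))) /\
    (~ Vn phi M Mbar t n v -> ole (rk (Mn phi M Mbar t s n v)) (oadd (rk s) n)).
Proof. intros _ _ _ _ _ _ Hrk n; exact (rk_Mn phi M Mbar t s Hrk n). Qed.
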